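(* Let $(\mathfrak{g},V,\Theta)$ be a Lie-Leibniz triple with associated graded Lie algebra $T_{\leq-1}$ and differential $\partial$. Then $m\circ\partial+\partial\circ m=0$ on $\Lambda^2(T_{\leq-1})$; that is, for every $i\geq1$, $\partial_{-i}\circ m_{-i-1}=-m_{-i}\circ\partial$ as maps $\Lambda^2(T_{\leq-1})|_{-i-2}\to T_{-i}$, where $\partial$ acts on $\Lambda^2$ as a graded derivation.
   Context: A (left) Leibniz algebra is a vector space $V$ with bilinear $\circ$ satisfying $x\circ(y\circ z)=(x\circ y)\circ z+y\circ(x\circ z)$; $\{x,y\}=\frac12(x\circ y+y\circ x)$. A Lie-Leibniz triple $(\mathfrak{g},V,\Theta)$ consists of a Lie algebra $\mathfrak{g}$, a $\mathfrak{g}$-module $V$ (action $a\cdot x$) with a Leibniz product $\circ$, and a linear map $\Theta:V\to\mathfrak{g}$ with $x\circ y=\Theta(x)\cdot y$ and $\Theta(x\circ y)=[\Theta(x),\Theta(y)]$. Associated graded Lie algebra: let $K$ be the largest $\mathfrak{g}$-submodule of $S^2(V)$ in the kernel of $x\odot y\mapsto\{x,y\}$; $F$ the free graded Lie algebra on $V[1]$ (degree $-1$), $F_{-2}\cong S^2(V)$, $\mathfrak g$ acting by derivations; $K_{-2}=K$, $K_{-i}=\sum_{j=1}^{i-2}[F_{-j},K_{-i+j}]$ ($i\geq3$); $T_{\leq-1}=F/K_\bullet$, $T_{-1}=V[1]$, with induced bracket $\llbracket\,.\,,.\,\rrbracket$ and $\mathfrak{g}$-action. Let $\mathfrak{h}=\mathrm{Im}\Theta$.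 The differential $\partial=(\partial_{-i}:T_{-i-1}\to T_{-i})_{i\geq1}$ is the unique family of $\mathfrak{h}$-equivariant linear maps with $\partial\llbracket u,v\rrbracket=2\{u,v\}$, $\partial\llbracket u,x\rrbracket=\Theta(u)\cdot x-\llbracket u,\partial x\rrbracket$, $\partial\llbracket x,y\rrbracket=\llbracket\partial x,y\rrbracket+(-1)^{|x|}\llbracket x,\partial y\rrbracket$ ($u,v\in T_{-1}$, $x,y\in T_{\leq-2}$); it is set to $0$ on $T_{-1}$ and extended to $\Lambda^2(T_{\leq-1})$ by $\partial(x\wedge y)=\partial x\wedge y+(-1)^{|x|}x\wedge\partial y$. The map $m:\Lambda^2(T_{\leq-1})\to T_{\leq-1}$ is $m(x\wedge y)=\Theta(x)\cdot y-(-1)^{|x||y|}\Theta(y)\cdot x$ with $\Theta:=0$ on $T_{\leq-2}$ (graded exterior algebra convention $x\wedge y=-(-1)^{|x||y|}y\wedge x$); $m_{-i}$ denotes its component landing in $T_{-i}$. *)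

From HB Require Import structures.
From mathcomp Require Import all_boot all_order all_algebra.
Set Implicit Arguments. Unset Strict Implicit. Unset Printing Implicit Defensive.
Import Order.TTheory GRing.Theory Num.Theory.
Local Open Scope ring_scope.

Definition bilinear_map (R : fieldType) (U W X : lmodType R) (f : U -> W -> X) : Prop :=
  (forall y, linear (fun x => f x y)) /\ (forall x, linear (f x)).

Definition lie_algebra (R : fieldType) (g : lmodType R) (lb : g -> g -> g) : Prop :=
  [/\ bilinear_map lb, (forall a, lb a a = 0) &
      (forall a b c, lb a (lb b c) + lb b (lb c a) + lb c (lb a b) = 0)].

Definition lie_module (R : fieldType) (g V : lmodType R) (lb : g -> g -> g)
  (act : g -> V -> V) : Prop :=
  bilinear_map act /\
  (forall a b x, act (lb a b) x = act a (act b x) - act b (act a x)).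

Definition leibniz_product (R : fieldType) (V : lmodType R) (circ : V -> V -> V) : Prop :=
  bilinear_map circ /\
  (forall x y z, circ x (circ y z) = circ (circ x y) z + circ y (circ x z)).

Definition circ_of (R : fieldType) (g V : lmodType R) (act : g -> V -> V)
  (Theta : V -> g) : V -> V -> V := fun x y => act (Theta x) y.

Definition lie_leibniz_triple (R : fieldType) (g V : lmodType R) (lb : g -> g -> g)
  (act : g -> V -> V) (Theta : V -> g) : Prop :=
  [/\ lie_algebra lb, lie_module lb act, linear Theta,
      leibniz_product (circ_of act Theta) &
      (forall x y, Theta (circ_of act Theta x y) = lb (Theta x) (Theta y))].

(* Elements of S^2(V) as formal sums  sum_k u_k (.) v_k  (seq of pairs).    *)

Definition s2act (R : fieldType) (g V : lmodType R) (act : g -> V -> V) (a : g)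
  (s : seq (V * V)) : seq (V * V) :=
  flatten [seq [:: (act a p.1, p.2); (p.1, act a p.2)] | p <- s].

(* action of a word a_1 ... a_n of U(g) *)
Definition s2word (R : fieldType) (g V : lmodType R) (act : g -> V -> V)
  (w : seq g) (s : seq (V * V)) : seq (V * V) :=
  foldr (s2act act) s w.

Definition sym_eval (R : fieldType) (V : lmodType R) (circ : V -> V -> V)
  (s : seq (V * V)) : V :=
  \sum_(p <- s) (2%:R^-1 *: (circ p.1 p.2 + circ p.2 p.1)).

(* s represents an element of K, the largest g-submodule of S^2 V contained
   in the kernel of x (.) y |-> {x,y}:  U(g).s lies in that kernel. *)
Definition inK (R : fieldType) (g V : lmodType R) (act : g -> V -> V) (Theta : V -> g)
  (s : seq (V * V)) : Prop :=
  forall w : seq g, sym_eval (circ_of act Theta) (s2word act w s) = 0.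

Definition brS2 (R : fieldType) (V L : lmodType R) (br : L -> L -> L) (phi : V -> L)
  (s : seq (V * V)) : L :=
  \sum_(p <- s) br (phi p.1) (phi p.2).

(* D n is the homogeneous component of degree -n.                          *)

Definition subspace (R : fieldType) (L : lmodType R) (D : {pred L}) : Prop :=
  0 \in D /\ (forall (c : R) x y, x \in D -> y \in D -> c *: x + y \in D).

Definition neg_graded (R : fieldType) (L : lmodType R) (D : nat -> {pred L}) : Prop :=
  [/\ (forall n, subspace (D n)),
      (forall x, x \in D 0%N -> x = 0),
      (forall x : L, exists (N : nat) (f : nat -> L),
          (forall n, f n \in D n) /\ x = \sum_(n < N) f n) &
      (forall (N : nat) (f : nat -> L), (forall n, f n \in D n) ->
          \sum_(n < N) f n = 0 -> forall n, (n < N)%N -> f n = 0)].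

Definition graded_lie (R : fieldType) (L : lmodType R) (D : nat -> {pred L})
  (br : L -> L -> L) : Prop :=
  [/\ neg_graded D, bilinear_map br,
      (forall m n x y, x \in D m -> y \in D n -> br x y \in D (m + n)%N),
      (forall m n x y, x \in D m -> y \in D n ->
          br x y = - (((-1) ^+ (m * n) : R) *: br y x)) &
      (forall m n x y z, x \in D m -> y \in D n ->
          br x (br y z) = br (br x y) z + ((-1) ^+ (m * n) : R) *: br y (br x z))].

Definition graded_lie_morph (R : fieldType) (T L : lmodType R)
  (DT : nat -> {pred T}) (DL : nat -> {pred L})
  (brT : T -> T -> T) (brL : L -> L -> L) (psi : T -> L) : Prop :=
  [/\ linear psi,
      (forall n x, x \in DT n -> psi x \in DL n) &
      (forall x y, psi (brT x y) = brL (psi x) (psi y))].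

(* T_{<=-1} = F / K_bullet, F the free graded Lie algebra on V[1],           *)
(* K_bullet the ideal generated by K in F_{-2} = S^2 V.  Characterized by   *)
(* its universal property (quotient of a free object), together with the    *)
(* (redundant but explicit) facts T_{-1} = V[1] and T generated by T_{-1}.  *)

Definition is_T_leibniz (R : fieldType) (g V : lmodType R) (act : g -> V -> V)
  (Theta : V -> g) (T : lmodType R) (DT : nat -> {pred T}) (brT : T -> T -> T)
  (iota : V -> T) : Prop :=
  graded_lie DT brT /\ linear iota /\ (forall v, iota v \in DT 1%N) /\
  (forall s, inK act Theta s -> brS2 brT iota s = 0) /\
  (forall (L : lmodType R) (DL : nat -> {pred L}) (brL : L -> L -> L),
     graded_lie DL brL ->
     forall phi : V -> L, linear phi -> (forall v, phi v \in DL 1%N) ->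
     (forall s, inK act Theta s -> brS2 brL phi s = 0) ->
     (exists psi : T -> L, graded_lie_morph DT DL brT brL psi /\
                           forall v, psi (iota v) = phi v) /\
     (forall psi1 psi2 : T -> L,
        graded_lie_morph DT DL brT brL psi1 -> graded_lie_morph DT DL brT brL psi2 ->
        (forall v, psi1 (iota v) = phi v) -> (forall v, psi2 (iota v) = phi v) ->
        forall x, psi1 x = psi2 x)) /\
  (forall y, y \in DT 1%N -> exists v, y = iota v) /\
  (forall n y, y \in DT n.+2 -> exists s : seq (V * T),
      all (fun p => p.2 \in DT n.+1) s /\ y = \sum_(p <- s) brT (iota p.1) p.2).

Definition induced_action (R : fieldType) (g V T : lmodType R) (lb : g -> g -> g)
  (act : g -> V -> V) (DT : nat -> {pred T}) (brT : T -> T -> T) (iota : V -> T)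
  (actT : g -> T -> T) : Prop :=
  [/\ bilinear_map actT,
      (forall n a x, x \in DT n -> actT a x \in DT n),
      (forall a x y, actT a (brT x y) = brT (actT a x) y + brT x (actT a y)),
      (forall a v, actT a (iota v) = iota (act a v)) &
      (forall a b x, actT (lb a b) x = actT a (actT b x) - actT b (actT a x))].

Definition theta_ext (R : fieldType) (g V T : lmodType R) (Theta : V -> g)
  (DT : nat -> {pred T}) (iota : V -> T) (ThetaT : T -> g) : Prop :=
  [/\ linear ThetaT, (forall v, ThetaT (iota v) = Theta v) &
      (forall n x, (2 <= n)%N -> x \in DT n -> ThetaT x = 0)].

Definition is_differential (R : fieldType) (g V T : lmodType R) (act : g -> V -> V)
  (Theta : V -> g) (DT : nat -> {pred T}) (brT : T -> T -> T) (iota : V -> T)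
  (actT : g -> T -> T) (dT : T -> T) : Prop :=
  linear dT /\
  (forall x, x \in DT 1%N -> dT x = 0) /\
  (forall n x, x \in DT n.+1 -> dT x \in DT n) /\
  (forall v x, dT (actT (Theta v) x) = actT (Theta v) (dT x)) /\
  (forall u v, dT (brT (iota u) (iota v))
               = iota (circ_of act Theta u v + circ_of act Theta v u)) /\
  (forall u n x, (2 <= n)%N -> x \in DT n ->
      dT (brT (iota u) x) = actT (Theta u) x - brT (iota u) (dT x)) /\
  (forall m n x y, (2 <= m)%N -> (2 <= n)%N -> x \in DT m -> y \in DT n ->
      dT (brT x y) = brT (dT x) y + ((-1) ^+ m : R) *: brT x (dT y)).

Definition mT (R : fieldType) (g T : lmodType R) (actT : g -> T -> T)
  (ThetaT : T -> g) (a b : nat) (x y : T) : T :=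
  actT (ThetaT x) y - ((-1) ^+ (a * b) : R) *: actT (ThetaT y) x.

From HB Require Import structures.
From mathcomp Require Import all_boot all_order all_algebra.
Set Implicit Arguments. Unset Strict Implicit. Unset Printing Implicit Defensive.
Import GRing.Theory.
Local Open Scope ring_scope.

(* Theta vanishes on T_{<=-2}, and so does Theta o d: on T_{-2} because
   d[[u,v]] = u o v + v o u is sent by Theta to [Theta u, Theta v] +
   [Theta v, Theta u] = 0, and below because d maps T_{<=-3} into T_{<=-2}.
   Hence every term of the identity vanishes unless one argument is a
   generator u of T_{-1}, and then the identity is the h-equivariance
   d (Theta(u) . y) = Theta(u) . d y of the differential. *)

Section AlternatingBilinear.
Variables (R : fieldType) (U X : lmodType R) (f : U -> U -> X).
Hypotheses (f_bilinear : bilinear_map f) (f_alt : forall a, f a a = 0).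

HB.instance Definition _ :=
  bilinear_isBilinear.Build R U U X *:%R *:%R f (f_bilinear.1, f_bilinear.2).

Lemma alternating_anticomm a b : f a b + f b a = 0.
Proof.
have := f_alt (a + b).
by rewrite linearDl !linearDr /= !f_alt add0r addr0.
Qed.

End AlternatingBilinear.

Section LieLeibnizDifferential.
Variables (R : fieldType) (g V T : lmodType R) (lb : g -> g -> g).
Variables (act : g -> V -> V) (Theta : V -> g).
Variables (DT : nat -> {pred T}) (brT : T -> T -> T) (iota : V -> T).
Variables (actT : g -> T -> T) (ThetaT : T -> g) (dT : T -> T).

Hypothesis triple : lie_leibniz_triple lb act Theta.
Hypothesis T_leibniz : is_T_leibniz act Theta DT brT iota.
Hypothesis actT_induced : induced_action lb act DT brT iota actT.
Hypothesis ThetaT_ext : theta_ext Theta DT iota ThetaT.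
Hypothesis dT_differential : is_differential act Theta DT brT iota actT dT.

Local Notation m := (mT actT ThetaT).

Let Theta_linear : linear Theta. Proof. by case: triple. Qed.
Let actT_bilinear : bilinear_map actT. Proof. by case: actT_induced. Qed.
Let ThetaT_linear : linear ThetaT. Proof. by case: ThetaT_ext. Qed.
Let dT_linear : linear dT. Proof. by case: dT_differential. Qed.

HB.instance Definition _ := GRing.isLinear.Build R V g *:%R Theta Theta_linear.
HB.instance Definition _ := GRing.isLinear.Build R T g *:%R ThetaT ThetaT_linear.
HB.instance Definition _ := GRing.isLinear.Build R T T *:%R dT dT_linear.
HB.instance Definition _ := bilinear_isBilinear.Build R g T T *:%R *:%R actT
  (actT_bilinear.1, actT_bilinear.2).

Lemma deg1_iota y : y \in DT 1 -> exists v, y = iota v.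
Proof. by case: T_leibniz => _ [_ [_ [_ [_ [surj _]]]]]; apply: surj. Qed.

Lemma deg2_bracket_iota y : y \in DT 2 ->
  exists2 s : seq (V * T), all (fun p => p.2 \in DT 1) s
    & y = \sum_(p <- s) brT (iota p.1) p.2.
Proof.
by case: T_leibniz => _ [_ [_ [_ [_ [_ /(_ 0%N y)]]]]] gen /gen [s []]; exists s.
Qed.

Lemma iota_deg1 v : iota v \in DT 1.
Proof. by case: T_leibniz => _ [_ []]. Qed.

Lemma thetaT_iota v : ThetaT (iota v) = Theta v.
Proof. by case: ThetaT_ext. Qed.

Lemma thetaT_eq0 n x : (2 <= n)%N -> x \in DT n -> ThetaT x = 0.
Proof. by case: ThetaT_ext => _ _; apply. Qed.

Lemma dT_deg1 x : x \in DT 1 -> dT x = 0.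
Proof. by case: dT_differential => _ [d1 _]; apply: d1. Qed.

Lemma dT_deg n x : x \in DT n.+1 -> dT x \in DT n.
Proof. by case: dT_differential => _ [_ [deg _]]; apply: deg. Qed.

Lemma dT_equivariant v x : dT (actT (Theta v) x) = actT (Theta v) (dT x).
Proof. by case: dT_differential => _ [_ [_ [equiv _]]]. Qed.

Lemma dT_bracket_iota u v :
  dT (brT (iota u) (iota v)) = iota (circ_of act Theta u v + circ_of act Theta v u).
Proof. by case: dT_differential => _ [_ [_ [_ [brack _]]]]. Qed.

Lemma thetaT_dT_bracket_iota u v : ThetaT (dT (brT (iota u) (iota v))) = 0.
Proof.
case: triple => [[lb_bilinear lb_alt _] _ _ _ Theta_circ].
rewrite dT_bracket_iota thetaT_iota linearD /= !Theta_circ.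
exact: alternating_anticomm lb_bilinear lb_alt _ _.
Qed.

Lemma thetaT_dT_eq0 n x : (2 <= n)%N -> x \in DT n -> ThetaT (dT x) = 0.
Proof.
case: n => [|[|[|n]]] // _ x_deg; last exact: thetaT_eq0 (dT_deg x_deg).
have [s s_deg1 ->] := deg2_bracket_iota x_deg.
rewrite !linear_sum big1_seq // => p /andP[_ p_s].
have [v ->] := deg1_iota (allP s_deg1 p p_s).
exact: thetaT_dT_bracket_iota.
Qed.

Lemma mT_thetaT_r a b x y : ThetaT y = 0 -> m a b x y = actT (ThetaT x) y.
Proof. by move=> Ty; rewrite /mT Ty linear0l scaler0 subr0. Qed.

Lemma mT_thetaT_l a b x y : ThetaT x = 0 ->
  m a b x y = - (((-1) ^+ (a * b) : R) *: actT (ThetaT y) x).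
Proof. by move=> Tx; rewrite /mT Tx linear0l sub0r. Qed.

Lemma mT_eq0 a b x y : ThetaT x = 0 -> ThetaT y = 0 -> m a b x y = 0.
Proof. by move=> Tx /(mT_thetaT_r a b x) ->; rewrite Tx linear0l. Qed.

Lemma dT_mT_iota_l b u y : (2 <= b)%N -> y \in DT b ->
  dT (m 1 b (iota u) y)
  = - (m 0 b (dT (iota u)) y + ((-1) ^+ 1 : R) *: m 1 b.-1 (iota u) (dT y)).
Proof.
move=> b2 y_deg; have Ty := thetaT_eq0 b2 y_deg; have TdTy := thetaT_dT_eq0 b2 y_deg.
rewrite (dT_deg1 (iota_deg1 _)) (mT_eq0 0 b (linear0 ThetaT) Ty) add0r.
rewrite (mT_thetaT_r 1 b _ Ty) (mT_thetaT_r 1 b.-1 _ TdTy) thetaT_iota.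
by rewrite dT_equivariant expr1 scaleN1r opprK.
Qed.

Lemma dT_mT_iota_r a x w : (2 <= a)%N -> x \in DT a ->
  dT (m a 1 x (iota w))
  = - (m a.-1 1 (dT x) (iota w) + ((-1) ^+ a : R) *: m a 0 x (dT (iota w))).
Proof.
move=> a2 x_deg; have Tx := thetaT_eq0 a2 x_deg; have TdTx := thetaT_dT_eq0 a2 x_deg.
rewrite (dT_deg1 (iota_deg1 _)) (mT_eq0 a 0 Tx (linear0 ThetaT)) scaler0 addr0.
rewrite (mT_thetaT_l a 1 _ Tx) (mT_thetaT_l a.-1 1 _ TdTx) thetaT_iota.
rewrite linearN linearZ /= dT_equivariant opprK !muln1.
by rewrite -[in LHS](prednK (ltnW a2)) exprS mulN1r scaleNr opprK.
Qed.

Lemma dT_mT_deg_ge2 a b x y : (2 <= a)%N -> (2 <= b)%N -> x \in DT a -> y \in DT b ->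
  dT (m a b x y) = - (m a.-1 b (dT x) y + ((-1) ^+ a : R) *: m a b.-1 x (dT y)).
Proof.
move=> a2 b2 x_deg y_deg.
have Tx := thetaT_eq0 a2 x_deg; have TdTx := thetaT_dT_eq0 a2 x_deg.
have Ty := thetaT_eq0 b2 y_deg; have TdTy := thetaT_dT_eq0 b2 y_deg.
rewrite (mT_eq0 a b Tx Ty) (mT_eq0 a.-1 b TdTx Ty) (mT_eq0 a b.-1 Tx TdTy).
by rewrite linear0 scaler0 addr0 oppr0.
Qed.

Lemma dT_mT_anticomm a b x y :
  (1 <= a)%N -> (1 <= b)%N -> (3 <= a + b)%N -> x \in DT a -> y \in DT b ->
  dT (m a b x y) = - (m a.-1 b (dT x) y + ((-1) ^+ a : R) *: m a b.-1 x (dT y)).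
Proof.
case: a => [|[|a]] // _; case: b => [|[|b]] // _ _ x_deg y_deg.
- by have [u ->] := deg1_iota x_deg; apply: dT_mT_iota_l.
- by have [w ->] := deg1_iota y_deg; apply: dT_mT_iota_r.
- exact: dT_mT_deg_ge2.
Qed.

End LieLeibnizDifferential.

Theorem mainTheorem9 (R : fieldType) (g : lmodType R) (lb : g -> g -> g)
  (V : lmodType R) (act : g -> V -> V) (Theta : V -> g)
  (T : lmodType R) (DT : nat -> {pred T}) (brT : T -> T -> T) (iota : V -> T)
  (actT : g -> T -> T) (ThetaT : T -> g) (dT : T -> T) :
  [pchar R] =i pred0 ->
  lie_leibniz_triple lb act Theta ->
  is_T_leibniz act Theta DT brT iota ->
  induced_action lb act DT brT iota actT ->
  theta_ext Theta DT iota ThetaT ->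
  is_differential act Theta DT brT iota actT dT ->
  forall i : nat, (1 <= i)%N ->
  forall (a b : nat) (x y : T), (1 <= a)%N -> (1 <= b)%N -> (a + b = i.+2)%N ->
    x \in DT a -> y \in DT b ->
    dT (mT actT ThetaT a b x y)
    = - (mT actT ThetaT a.-1 b (dT x) y
         + ((-1) ^+ a : R) *: mT actT ThetaT a b.-1 x (dT y)).
Proof.
(* No characteristic assumption is needed: [is_differential] states
   d[[u,v]] = 2{u,v} as u o v + v o u, with no division by 2. *)
move=> _ triple T_leibniz actT_induced ThetaT_ext dT_differential i i1
  a b x y a1 b1 ab x_deg y_deg.
have ab3 : (3 <= a + b)%N by rewrite ab ltnS; exact: i1.
exact: (dT_mT_anticomm triple T_leibniz actT_induced ThetaT_ext dT_differential
  a1 b1 ab3 x_deg y_deg).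
Qed.
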